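(* Let $S$ be a left amenable semigroup and let $X$ be a Banach space that is complemented in its bidual $X^{**}$ (i.e. there is a bounded linear projection from $X^{**}$ onto the canonical image of $X$). Then there exists an $X$-valued left invariant mean on $S$, i.e. a bounded linear map $M: B(S,X)\to X$ such that $M(x\chi_S)=x$ for all $x\in X$ and $M(f)=M(f_s)$ for all $f\in B(S,X)$ and $s\in S$.
   Context: $B(S,X)$ denotes the Banach space of all bounded functions $f:S\to X$ with the supremum norm; $x\chi_S$ denotes the function on $S$ identically equal to $x$; for $f$ defined on $S$ and $s\in S$, $f_s(t)=f(st)$ is the left translate. $S$ is left amenable if there is a left invariant mean on $\ell_\infty(S)$, i.e. a norm-one linear functional $m$ on $\ell_\infty(S)$ with $m(e)=1$ ($e$ the constant function $1$) and $m(f)=m(f_s)$ for all $f\in\ell_\infty(S)$, $s\in S$. *)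

From HB Require Import structures.
From mathcomp Require Import all_boot all_order all_algebra.
From mathcomp Require Import all_classical all_reals topology normedtype.
Set Implicit Arguments. Unset Strict Implicit. Unset Printing Implicit Defensive.
Import Order.TTheory GRing.Theory Num.Theory.
Import numFieldNormedType.Exports.
Local Open Scope classical_set_scope.
Local Open Scope ring_scope.

Section Defs.
Variable R : realType.

Section Bounded.
Variable S : Type.
Variable X : normedModType R.

Definition bdd (f : S -> X) : Prop := exists C : R, forall s, `|f s| <= C.

Definition supnorm (f : S -> X) : R := sup [set `|f s| | s in [set: S]].
End Bounded.

Definition ltrans (S T : Type) (op : S -> S -> S) (f : S -> T) (s : S) : S -> T :=
  fun t => f (op s t).

(* m : l_oo(S) -> R, represented as a function on S -> R of which only the
   values on bounded functions matter. *)
Definition left_invariant_mean (S : Type) (op : S -> S -> S)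
    (m : (S -> R) -> R) : Prop :=
  (forall (a : R) (f g : S -> R), bdd f -> bdd g ->
     m (fun s => a * f s + g s) = a * m f + m g) /\
  (* norm one: ||m|| <= 1 together with m(e) = 1 gives ||m|| = 1 *)
  (forall f : S -> R, bdd f -> `|m f| <= supnorm f) /\
  m (fun _ => 1) = 1 /\
  (forall (f : S -> R) (s : S), bdd f -> m (ltrans op f s) = m f).

Definition left_amenable (S : Type) (op : S -> S -> S) : Prop :=
  exists m, left_invariant_mean op m.

Section Bidual.
Variable X : normedModType R.

Definition dual_elem (phi : X -> R) : Prop :=
  (forall (a : R) (x y : X), phi (a *: x + y) = a * phi x + phi y) /\
  (exists C : R, forall x, `|phi x| <= C * `|x|).

Definition dnorm (phi : X -> R) : R := sup [set `|phi x| | x in [set x : X | `|x| <= 1]].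

(* elements of X^** : bounded linear functionals on X^*; a map
   F : (X -> R) -> R represents the functional phi |-> F phi on X^*
   (its values outside X^* are irrelevant). *)
Definition bidual_elem (F : (X -> R) -> R) : Prop :=
  (forall (a : R) (phi psi : X -> R), dual_elem phi -> dual_elem psi ->
     F (fun x => a * phi x + psi x) = a * F phi + F psi) /\
  (exists C : R, forall phi, dual_elem phi -> `|F phi| <= C * dnorm phi).

Definition beq (F G : (X -> R) -> R) : Prop :=
  forall phi, dual_elem phi -> F phi = G phi.

Definition bnorm (F : (X -> R) -> R) : R :=
  sup [set `|F phi| | phi in [set phi | dual_elem phi /\ dnorm phi <= 1]].

Definition canon (x : X) : (X -> R) -> R := fun phi => phi x.

Definition complemented_in_bidual : Prop :=
  exists P : ((X -> R) -> R) -> ((X -> R) -> R),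
    (forall F, bidual_elem F -> bidual_elem (P F)) /\
    (forall (a : R) (F G : (X -> R) -> R), bidual_elem F -> bidual_elem G ->
       beq (P (fun phi => a * F phi + G phi)) (fun phi => a * P F phi + P G phi)) /\
    (exists C : R, forall F, bidual_elem F -> bnorm (P F) <= C * bnorm F) /\
    (forall F, bidual_elem F -> beq (P (P F)) (P F)) /\
    (forall F, bidual_elem F -> exists x : X, beq (P F) (canon x)) /\
    (forall x : X, beq (P (canon x)) (canon x)).
End Bidual.

Definition X_valued_left_invariant_mean (S : Type) (op : S -> S -> S)
    (X : normedModType R) (M : (S -> X) -> X) : Prop :=
  (forall (a : R) (f g : S -> X), bdd f -> bdd g ->
     M (fun s => a *: f s + g s) = a *: M f + M g) /\
  (exists C : R, forall f : S -> X, bdd f -> `|M f| <= C * supnorm f) /\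
  (forall x : X, M (fun _ => x) = x) /\
  (forall (f : S -> X) (s : S), bdd f -> M f = M (ltrans op f s)).

End Defs.

(* With F_f the element phi |-> m (phi \o f) of X**, the X-valued mean is
   M f := J^-1 (P F_f), where J : X -> X** is the canonical embedding and P the
   projection onto J(X). Every property of M is tested against functionals,
   through phi (M f) = P F_f phi: P and f |-> F_f inherit linearity, boundedness,
   the value on constants and left invariance from m. Such tests determine M f
   because functionals separate and norm the points of X (Hahn-Banach, proved by
   Zorn's lemma on linear graphs dominated by the norm). *)

From Pilot Require Import Defs.
From mathcomp Require Import all_boot all_order all_algebra.
From mathcomp Require Import all_classical all_reals topology normedtype.
Import numFieldNormedType.Exports.
From mathcomp Require Import ring lra.
Set Implicit Arguments. Unset Strict Implicit. Unset Printing Implicit Defensive.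
Import Order.TTheory GRing.Theory Num.Theory.
Local Open Scope classical_set_scope.
Local Open Scope ring_scope.

Section Suprema.
Variable R : realType.

Lemma sup_ge0 (E : set R) : (forall x, E x -> 0 <= x) -> 0 <= sup E.
Proof.
move=> E_ge0; have [[[x Ex] E_ub]|/sup_out -> //] := pselect (has_sup E).
exact: le_trans (E_ge0 _ Ex) (ub_le_sup E_ub Ex).
Qed.

Lemma ge0_ge_sup (E : set R) (C : R) : 0 <= C -> ubound E C -> sup E <= C.
Proof.
move=> C_ge0 EC; have [Ene0|/nonemptyPn ->] := pselect (E !=set0); last by rewrite sup0.
exact: ge_sup.
Qed.

Lemma le_sup_ub (E : set R) (C x : R) : ubound E C -> E x -> x <= sup E.
Proof. by move=> EC; apply: ub_le_sup; exists C. Qed.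

End Suprema.

Section HahnBanach.
Variables (R : realType) (X : normedModType R).
Implicit Types (G A : set (X * R)) (x y : X) (r c : R).

Definition dominated_linear_graph G :=
  [/\ forall p q, G p -> G q -> G (p.1 + q.1, p.2 + q.2),
      forall (a : R) p, G p -> G (a *: p.1, a * p.2) &
      forall p, G p -> p.2 <= `|p.1|].

Lemma dominated_linear_graph_functional G x r r' :
  dominated_linear_graph G -> G (x, r) -> G (x, r') -> r = r'.
Proof.
move=> [GD GZ Gle] Gr Gr'.
have diff0 r1 r2 : G (x, r1) -> G (x, r2) -> r1 - r2 <= 0.
  move=> G1 G2; have := Gle _ (GD _ _ G1 (GZ (-1) _ G2)).
  by rewrite /= scaleN1r (subrr x) normr0 mulN1r.
by apply/eqP; rewrite eq_le -subr_le0 diff0 //= -subr_le0 diff0.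
Qed.

Lemma dominated_linear_graph_bigcup (F : set (set (X * R))) :
  (forall G, F G -> dominated_linear_graph G) -> total_on F subset ->
  dominated_linear_graph (\bigcup_(G in F) G).
Proof.
move=> Fdom Ftot; have common p q : (\bigcup_(G in F) G) p ->
    (\bigcup_(G in F) G) q -> exists2 G, F G & G p /\ G q.
  move=> [A FA Ap] [B FB Bq]; have [AB|BA] := Ftot _ _ FA FB.
  - by exists B => //; split => //; apply: AB.
  - by exists A => //; split => //; apply: BA.
split.
- move=> p q Fp Fq; have [G FG [Gp Gq]] := common _ _ Fp Fq.
  by exists G => //; have [GD _ _] := Fdom _ FG; apply: GD.
- by move=> a p [G FG Gp]; exists G => //; have [_ GZ _] := Fdom _ FG; apply: GZ.
- by move=> p [G FG Gp]; have [_ _ Gle] := Fdom _ FG; apply: Gle.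
Qed.

Definition graph_extension A y c :=
  [set p | exists x r (t : R), A (x, r) /\ p = (x + t *: y, r + t * c)].

Lemma ex_graph_extension_constant A y : dominated_linear_graph A -> A !=set0 ->
  exists c, forall x r, A (x, r) -> r - `|x - y| <= c /\ c <= `|x + y| - r.
Proof.
move=> [AD _ Ale] [[x0 r0] A0].
have sep x1 r1 x2 r2 : A (x1, r1) -> A (x2, r2) -> r1 - `|x1 - y| <= `|x2 + y| - r2.
  move=> A1 A2; have /= := Ale _ (AD _ _ A1 A2).
  have -> : x1 + x2 = (x1 - y) + (x2 + y) by rewrite addrACA addNr addr0.
  by move/le_trans/(_ (ler_normD _ _)); lra.
exists (sup [set p.2 - `|p.1 - y| | p in A]) => x r Axr; split.
- apply: (le_sup_ub (C := `|x0 + y| - r0)); last by exists (x, r).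
  by move=> _ [[x1 r1] A1 <-]; apply: sep.
- apply: ge_sup; first by exists (r0 - `|x0 - y|), (x0, r0).
  by move=> _ [[x1 r1] A1 <-]; apply: sep.
Qed.

Lemma dominated_linear_graph_extension A y c : dominated_linear_graph A ->
  (forall x r, A (x, r) -> r - `|x - y| <= c /\ c <= `|x + y| - r) ->
  dominated_linear_graph (graph_extension A y c).
Proof.
move=> [AD AZ Ale] cAB.
have normZV (s : R) (z w : X) : 0 < s -> `|s^-1 *: z + w| = s^-1 * `|z + s *: w|.
  move=> s_gt0; rewrite -[s^-1 in RHS]gtr0_norm ?invr_gt0 // -normrZ.
  by rewrite scalerDr scalerA mulVf ?gt_eqF // scale1r.
split.
- move=> _ _ [x [r [t [Axr ->]]]] [x' [r' [t' [Axr' ->]]]] /=.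
  exists (x + x'), (r + r'), (t + t'); split; first exact: (AD _ _ Axr Axr').
  by congr pair; [rewrite scalerDl addrACA | ring].
- move=> a _ [x [r [t [Axr ->]]]] /=.
  exists (a *: x), (a * r), (a * t); split; first exact: (AZ a _ Axr).
  by congr pair; [rewrite scalerDr scalerA | ring].
move=> _ [x [r [t [Axr ->]]]] /=.
have [t_gt0|t_le0] := ltrP 0 t.
  have [_] := cAB _ _ (AZ t^-1 _ Axr); rewrite /= normZV // -mulrBr.
  by rewrite ler_pdivlMl // => tc; lra.
have [t0|t_lt0] := eqVneq t 0; first by rewrite t0 scale0r mul0r !addr0 (Ale _ Axr).
have s_gt0 : 0 < - t by rewrite oppr_gt0 lt_neqAle t_lt0 t_le0.
have [+ _] := cAB _ _ (AZ (- t)^-1 _ Axr); rewrite /= normZV // scaleNr scalerN opprK.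
by rewrite -mulrBr ler_pdivrMl // => tc; lra.
Qed.

Lemma ex_fun_of_total_dominated_linear_graph A : dominated_linear_graph A ->
    (forall x, exists r, A (x, r)) ->
  exists phi : X -> R,
    [/\ forall (a : R) x y, phi (a *: x + y) = a * phi x + phi y,
        forall x, `|phi x| <= `|x| & forall x, A (x, phi x)].
Proof.
move=> Adom Atot; have [AD AZ Ale] := Adom.
pose phi x := xget 0 [set r | A (x, r)].
have Aphi x : A (x, phi x) by exact: xgetPex (Atot x).
exists phi; split=> [a x y|x|//].
- have /= := AD _ _ (AZ a _ (Aphi x)) (Aphi y).
  exact: dominated_linear_graph_functional Adom (Aphi _).
- rewrite ler_norml (Ale _ (Aphi x)) andbT; have /= := Ale _ (AZ (-1) _ (Aphi x)).
  by rewrite scaleN1r normrN mulN1r lerNl.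
Qed.

Lemma norming_linear_functional x0 : exists phi : X -> R,
  [/\ forall (a : R) x y, phi (a *: x + y) = a * phi x + phi y,
      forall x, `|phi x| <= `|x| & phi x0 = `|x0|].
Proof.
pose line := [set (t *: x0, t * `|x0|) | t in [set: R]].
have line_dom : dominated_linear_graph line.
  split.
  - by move=> _ _ [t _ <-] [s _ <-]; exists (t + s); rewrite // scalerDl mulrDl.
  - by move=> a _ [t _ <-]; exists (a * t); rewrite // scalerA mulrA.
  - by move=> _ [t _ <-]; rewrite /= normrZ ler_wpM2r // real_ler_norm ?num_real.
(* The empty graph is admitted so that the empty chain has an upper bound. *)
pose P := [set G | dominated_linear_graph G /\ (G = set0 \/ line `<=` G)].
have [A [[Adom A0] Amax]] : exists A, P A /\ forall B, A `<` B -> ~ P B.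
  apply: Zorn_bigcup => F FP Ftot; split.
    by apply: dominated_linear_graph_bigcup Ftot => G /FP[].
  have [[G FG lineG]|noline] := pselect (exists2 G, F G & line `<=` G).
    by right => p /lineG Gp; exists G.
  left; apply/seteqP; split => // p [G FG Gp].
  have [_ [G0|lineG]] := FP _ FG; first by rewrite G0 in Gp.
  by exfalso; apply: noline; exists G.
have lineA : line `<=` A.
  case: A0 => // A0; exfalso; apply: (Amax line); last by split => //; right.
  rewrite A0; split => // /(_ (0, 0)); apply.
  by exists 0; rewrite // scale0r mul0r.
have A00 : A (0, 0) by apply: lineA; exists 0; rewrite // scale0r mul0r.
have Atot y : exists r, A (y, r).
  apply: contrapT => noy.
  have [c cAB] := ex_graph_extension_constant y Adom (ex_intro _ _ A00).
  have AE : A `<=` graph_extension A y c.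
    by move=> [x r] Axr; exists x, r, 0; rewrite scale0r mul0r !addr0.
  apply: (Amax (graph_extension A y c)).
    split => // /(_ (y, c)) Ayc; apply: noy; exists c; apply: Ayc.
    by exists 0, 0, 1; rewrite scale1r mul1r !add0r.
  split; first exact: dominated_linear_graph_extension.
  by right; apply: subset_trans AE.
have [phi [phi_lin phi_le Aphi]] := ex_fun_of_total_dominated_linear_graph Adom Atot.
exists phi; split => //; apply: dominated_linear_graph_functional Adom (Aphi x0) _.
by apply: lineA; exists 1; rewrite // scale1r mul1r.
Qed.

End HahnBanach.

Section Duality.
Variables (R : realType) (X : normedModType R).
Implicit Types (phi psi : X -> R) (F G : (X -> R) -> R) (x y : X).

Lemma dual_elemD phi x y : dual_elem phi -> phi (x + y) = phi x + phi y.
Proof. by move=> [lin _]; have := lin 1 x y; rewrite scale1r mul1r. Qed.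

Lemma dual_elem0 phi : dual_elem phi -> phi 0 = 0.
Proof. by move=> dphi; apply: (addrI (phi 0)); rewrite addr0 -dual_elemD ?addr0. Qed.

Lemma dual_elemZ phi (a : R) x : dual_elem phi -> phi (a *: x) = a * phi x.
Proof.
by move=> dphi; have [lin _] := dphi; rewrite -[a *: x]addr0 lin dual_elem0 // addr0.
Qed.

Lemma le_dnorm phi x : dual_elem phi -> `|x| <= 1 -> `|phi x| <= dnorm phi.
Proof.
move=> [_ [C phiC]] x_le1; apply: (le_sup_ub (C := `|C|)); last by exists x.
move=> _ [y y_le1 <-].
apply: le_trans (phiC y) (le_trans (ler_norm _) _).
by rewrite normrM normr_id -[leRHS]mulr1; apply: ler_wpM2l.
Qed.

Lemma dnorm_ge0 phi : 0 <= dnorm phi.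
Proof. by apply: sup_ge0 => _ [x _ <-]. Qed.

Lemma dual_elem_bound phi x : dual_elem phi -> `|phi x| <= dnorm phi * `|x|.
Proof.
move=> dphi; have [->|x_neq0] := eqVneq x 0.
  by rewrite dual_elem0 // !normr0 mulr0.
have nx_gt0 : 0 < `|x| by rewrite normr_gt0.
have -> : x = `|x| *: (`|x|^-1 *: x) by rewrite scalerA mulfV ?gt_eqF // scale1r.
rewrite dual_elemZ // normrM normrZ normr_id mulrC normfZV // mulr1.
by rewrite ler_pM2r // le_dnorm // normfZV.
Qed.

Lemma dnorm_le1 phi : (forall x, `|phi x| <= `|x|) -> dnorm phi <= 1.
Proof.
by move=> phi_le; apply: ge0_ge_sup => // _ [x /= x_le1 <-]; apply: le_trans x_le1.
Qed.

Lemma norming_functional x :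
  exists phi, [/\ dual_elem phi, dnorm phi <= 1 & phi x = `|x|].
Proof.
have [phi [lin phi_le phix]] := norming_linear_functional x.
exists phi; split => //; last exact: dnorm_le1.
by split => //; exists 1 => y; rewrite mul1r.
Qed.

Lemma canon_beq_inj x y : beq (Defs.canon x) (Defs.canon y) -> x = y.
Proof.
move=> xy; have [phi [dphi _ phixy]] := norming_functional (x - y).
apply/eqP; rewrite -subr_eq0 -normr_eq0 -phixy.
by rewrite -scaleN1r dual_elemD // dual_elemZ // [phi x]xy // mulN1r subrr.
Qed.

Lemma le_bnorm G phi : bidual_elem G -> dual_elem phi -> dnorm phi <= 1 ->
  `|G phi| <= bnorm G.
Proof.
move=> [_ [C GC]] dphi phi_le1; apply: (le_sup_ub (C := `|C|)); last by exists phi.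
move=> _ [psi [dpsi psi_le1] <-].
apply: le_trans (GC _ dpsi) (le_trans (ler_norm _) _).
by rewrite normrM (ger0_norm (dnorm_ge0 psi)) -[leRHS]mulr1; apply: ler_wpM2l.
Qed.

Lemma bnorm_ge0 G : 0 <= bnorm G.
Proof. by apply: sup_ge0 => _ [phi _ <-]. Qed.

Lemma bnorm_le G (C : R) : 0 <= C ->
  (forall phi, dual_elem phi -> dnorm phi <= 1 -> `|G phi| <= C) -> bnorm G <= C.
Proof.
by move=> C_ge0 GC; apply: ge0_ge_sup => // _ [phi [dphi phi_le1] <-]; apply: GC.
Qed.

Lemma eq_bnorm F G : beq F G -> bnorm F = bnorm G.
Proof.
move=> FG; rewrite /bnorm; congr sup.
by apply/seteqP; split=> _ [phi [dphi phi_le1] <-]; exists phi; rewrite ?FG.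
Qed.

Lemma norm_le_bnorm_canon x : `|x| <= bnorm (Defs.canon x).
Proof.
have [phi [dphi phi_le1 phix]] := norming_functional x.
have bx : bidual_elem (Defs.canon x).
  split=> [a psi psi' _ _ //|]; exists `|x| => psi dpsi.
  by rewrite mulrC; apply: dual_elem_bound.
by rewrite -[X in X <= _]normr_id -phix; apply: le_bnorm.
Qed.

Lemma bidual_elem_comb (a : R) F G : bidual_elem F -> bidual_elem G ->
  bidual_elem (fun phi => a * F phi + G phi).
Proof.
move=> [linF [C1 FC1]] [linG [C2 GC2]]; split=> [b phi psi dphi dpsi|].
  by rewrite linF // linG //; ring.
exists (`|a| * C1 + C2) => phi dphi; apply: le_trans (ler_normD _ _) _.
rewrite normrM mulrDl -mulrA lerD ?GC2 //.
by rewrite ler_wpM2l ?FC1.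
Qed.

End Duality.

Section BoundedFunctions.
Variables (R : realType) (S : Type) (T : normedModType R).
Implicit Types (f g : S -> T).

Lemma bdd_cst (x : T) : bdd (fun _ : S => x).
Proof. by exists `|x|. Qed.

Lemma bdd_comb (a : R) f g : bdd f -> bdd g -> bdd (fun s => a *: f s + g s).
Proof.
move=> [C1 fC1] [C2 gC2]; exists (`|a| * C1 + C2) => s.
by rewrite (le_trans (ler_normD _ _)) // normrZ lerD // ler_wpM2l.
Qed.

Lemma bdd_ltrans (op : S -> S -> S) f s : bdd f -> bdd (ltrans op f s).
Proof. by move=> [C fC]; exists C => t; apply: fC. Qed.

Lemma le_supnorm f s : bdd f -> `|f s| <= supnorm f.
Proof. by move=> [C fC]; apply: (le_sup_ub (C := C)) => [_ [t _ <-]|]; last exists s. Qed.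

Lemma supnorm_ge0 f : 0 <= supnorm f.
Proof. by apply: sup_ge0 => _ [s _ <-]. Qed.

Lemma supnorm_le f (C : R) : 0 <= C -> (forall s, `|f s| <= C) -> supnorm f <= C.
Proof. by move=> C_ge0 fC; apply: ge0_ge_sup => // _ [s _ <-]. Qed.

End BoundedFunctions.

Section DualComposition.
Variables (R : realType) (S : Type) (X : normedModType R).
Variables (f : S -> X) (phi : X -> R).
Hypotheses (dphi : dual_elem phi) (f_bdd : bdd f).

Lemma bdd_dual_comp : bdd (fun s => phi (f s)).
Proof.
have [C fC] := f_bdd; exists (dnorm phi * C) => s.
by rewrite (le_trans (dual_elem_bound _ dphi)) // ler_wpM2l ?dnorm_ge0.
Qed.

Lemma supnorm_dual_comp : supnorm (fun s => phi (f s)) <= dnorm phi * supnorm f.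
Proof.
apply: supnorm_le => [|s]; first by rewrite mulr_ge0 ?dnorm_ge0 ?supnorm_ge0.
by rewrite (le_trans (dual_elem_bound _ dphi)) // ler_wpM2l ?dnorm_ge0 ?le_supnorm.
Qed.

End DualComposition.

Section VectorMean.
Variables (R : realType) (X : normedModType R).
Variables (P : ((X -> R) -> R) -> ((X -> R) -> R)) (CP : R).
Hypotheses (P_bidual : forall F, bidual_elem F -> bidual_elem (P F))
  (P_linear : forall (a : R) (F G : (X -> R) -> R), bidual_elem F -> bidual_elem G ->
     beq (P (fun phi => a * F phi + G phi)) (fun phi => a * P F phi + P G phi))
  (P_bounded : forall F, bidual_elem F -> bnorm (P F) <= CP * bnorm F)
  (P_range : forall F, bidual_elem F -> exists x : X, beq (P F) (Defs.canon x))
  (P_canon : forall x : X, beq (P (Defs.canon x)) (Defs.canon x)).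
Implicit Types (F G : (X -> R) -> R) (phi : X -> R).

Lemma proj_beq0 G : bidual_elem G -> beq G (fun _ => 0) -> beq (P G) (fun _ => 0).
Proof.
move=> bG G0; have [y PGy] := P_range bG.
have y0 : y = 0.
  apply/eqP; rewrite -normr_le0 (le_trans (norm_le_bnorm_canon y)) //.
  rewrite -(eq_bnorm PGy) (le_trans (P_bounded bG)) //.
  suff -> : bnorm G = 0 by rewrite mulr0.
  by apply/eqP; rewrite eq_le bnorm_ge0 bnorm_le // => phi dphi _; rewrite G0 ?normr0.
by move=> phi dphi; rewrite PGy // /Defs.canon y0 dual_elem0.
Qed.

(* P acts on all of (X -> R) -> R, so a priori it could distinguish elements of
   X** that agree on X*; linearity and boundedness rule this out. *)
Lemma proj_beq F F' : bidual_elem F -> bidual_elem F' -> beq F F' -> beq (P F) (P F').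
Proof.
move=> bF bF' FF'; have bD := bidual_elem_comb (-1) bF bF'.
have -> : F' = (fun phi => 1 * F phi + (-1 * F phi + F' phi)).
  by apply/funext => phi; ring.
move=> phi dphi; rewrite P_linear // (proj_beq0 bD) //; first ring.
by move=> psi dpsi; rewrite FF' //; ring.
Qed.

Definition proj_point F : X := xget 0 [set x | beq (P F) (Defs.canon x)].

Lemma proj_pointE F phi : bidual_elem F -> dual_elem phi -> phi (proj_point F) = P F phi.
Proof. by move=> bF dphi; rewrite (xgetPex 0 (P_range bF)). Qed.

Section Mean.
Variables (S : Type) (op : S -> S -> S) (m : (S -> R) -> R).
Hypotheses (m_linear : forall (a : R) (f g : S -> R), bdd f -> bdd g ->
     m (fun s => a * f s + g s) = a * m f + m g)
  (m_bounded : forall f : S -> R, bdd f -> `|m f| <= supnorm f)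
  (m1 : m (fun _ => 1) = 1)
  (m_invariant : forall (f : S -> R) (s : S), bdd f -> m (ltrans op f s) = m f).
Implicit Types (f g : S -> X).

Lemma mean_cst (c : R) : m (fun _ => c) = c.
Proof.
have m0 : m (fun _ => 0) = 0.
  have := m_linear 1 (bdd_cst S (0 : R)) (bdd_cst S (0 : R)).
  rewrite mul1r addr0 mul1r => m00.
  by apply: (addrI (m (fun _ => 0))); rewrite addr0 -m00.
have := m_linear c (bdd_cst S (1 : R)) (bdd_cst S (0 : R)).
by rewrite mulr1 addr0 m1 m0 mulr1 addr0.
Qed.

Definition mean_bidual f : (X -> R) -> R := fun phi => m (fun s => phi (f s)).

Lemma bidual_elem_mean_bidual f : bdd f -> bidual_elem (mean_bidual f).
Proof.
move=> f_bdd; split=> [a phi psi dphi dpsi|].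
  by rewrite /mean_bidual m_linear //; apply: bdd_dual_comp.
exists (supnorm f) => phi dphi; rewrite mulrC.
exact: le_trans (m_bounded (bdd_dual_comp dphi f_bdd)) (supnorm_dual_comp dphi f_bdd).
Qed.

Lemma bnorm_mean_bidual f : bdd f -> bnorm (mean_bidual f) <= supnorm f.
Proof.
move=> f_bdd; apply: bnorm_le => [|phi dphi phi_le1]; first exact: supnorm_ge0.
apply: le_trans (m_bounded (bdd_dual_comp dphi f_bdd)) _.
apply: le_trans (supnorm_dual_comp dphi f_bdd) _.
by rewrite -[leRHS]mul1r ler_wpM2r ?supnorm_ge0.
Qed.

Definition vector_mean f : X := proj_point (mean_bidual f).

Lemma vector_meanE f phi : bdd f -> dual_elem phi ->
  phi (vector_mean f) = P (mean_bidual f) phi.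
Proof. by move=> f_bdd; apply: proj_pointE; apply: bidual_elem_mean_bidual. Qed.

Lemma vector_mean_comb (a : R) f g : bdd f -> bdd g ->
  vector_mean (fun s => a *: f s + g s) = a *: vector_mean f + vector_mean g.
Proof.
move=> f_bdd g_bdd; have fg_bdd := bdd_comb a f_bdd g_bdd.
have bf := bidual_elem_mean_bidual f_bdd; have bg := bidual_elem_mean_bidual g_bdd.
apply: canon_beq_inj => phi dphi; rewrite /Defs.canon dual_elemD // dual_elemZ //.
rewrite !vector_meanE // -P_linear //.
apply: (proj_beq (bidual_elem_mean_bidual fg_bdd) (bidual_elem_comb a bf bg) _ dphi).
move=> psi dpsi; rewrite /mean_bidual -m_linear; try exact: bdd_dual_comp.
by congr m; apply/funext => s; rewrite dual_elemD // dual_elemZ.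
Qed.

Lemma vector_mean_bounded f : bdd f -> `|vector_mean f| <= `|CP| * supnorm f.
Proof.
move=> f_bdd; have bf := bidual_elem_mean_bidual f_bdd.
have [phi [dphi phi_le1 <-]] := norming_functional (vector_mean f).
rewrite vector_meanE // (le_trans (ler_norm _)) //.
rewrite (le_trans (le_bnorm (P_bidual bf) dphi phi_le1)) // (le_trans (P_bounded bf)) //.
rewrite (le_trans (ler_wpM2r (bnorm_ge0 _) (ler_norm CP))) //.
by rewrite ler_wpM2l ?bnorm_mean_bidual.
Qed.

Lemma vector_mean_cst (x : X) : vector_mean (fun _ => x) = x.
Proof.
apply: canon_beq_inj => phi dphi; rewrite /Defs.canon (vector_meanE (bdd_cst S x) dphi).
have -> : mean_bidual (fun _ => x) = Defs.canon x.
  by apply/funext => psi; rewrite /mean_bidual mean_cst.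
exact: P_canon.
Qed.

Lemma vector_mean_ltrans f s : bdd f -> vector_mean f = vector_mean (ltrans op f s).
Proof.
move=> f_bdd; have fs_bdd := bdd_ltrans op s f_bdd.
apply: canon_beq_inj => phi dphi; rewrite /Defs.canon !vector_meanE //.
apply: (proj_beq (bidual_elem_mean_bidual f_bdd) (bidual_elem_mean_bidual fs_bdd) _ dphi).
move=> psi dpsi.
by rewrite /mean_bidual -(m_invariant s (bdd_dual_comp dpsi f_bdd)).
Qed.

Lemma vector_mean_left_invariant : X_valued_left_invariant_mean op vector_mean.
Proof.
split; first exact: vector_mean_comb.
split; first by exists `|CP|; exact: vector_mean_bounded.
by split; [exact: vector_mean_cst | exact: vector_mean_ltrans].
Qed.

End Mean.
End VectorMean.

Theorem proposition1 (R : realType) (S : Type) (op : S -> S -> S)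
  (op_assoc : forall a b c : S, op a (op b c) = op (op a b) c)
  (X : completeNormedModType R) :
  left_amenable R op ->
  complemented_in_bidual X ->
  exists M : (S -> X) -> X, X_valued_left_invariant_mean op M.
Proof.
move=> [m [m_linear [m_bounded [m1 m_invariant]]]].
move=> [P [P_bidual [P_linear [[CP P_bounded] [_ [P_range P_canon]]]]]].
exists (vector_mean P m).
exact: (vector_mean_left_invariant (op := op) P_bidual P_linear P_bounded P_range
  P_canon m_linear m_bounded m1 m_invariant).
Qed.
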